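(* A Lie-Yamaguti algebra $(\mathfrak h,[\cdot,\cdot]_{\mathfrak h},[\![\cdot,\cdot,\cdot]\!]_{\mathfrak h})$ has a phase space if and only if it is the subadjacent Lie-Yamaguti algebra of some pre-Lie-Yamaguti algebra structure on $\mathfrak h$ (i.e. it admits a compatible pre-Lie-Yamaguti algebra structure).
   Context: All vector spaces are over a field of characteristic $0$ and finite-dimensional. A Lie-Yamaguti algebra is a vector space $\mathfrak g$ with a bilinear skew-symmetric $[\cdot,\cdot]$ and a trilinear $[\![\cdot,\cdot,\cdot]\!]$ skew-symmetric in its first two arguments such that for all $x,y,z,w,t$: (1) $[[x,y],z]+[[y,z],x]+[[z,x],y]+[\![x,y,z]\!]+[\![y,z,x]\!]+[\![z,x,y]\!]=0$; (2) $[\![[x,y],z,w]\!]+[\![[y,z],x,w]\!]+[\![[z,x],y,w]\!]=0$; (3) $[\![x,y,[z,w]]\!]=[[\![x,y,z]\!],w]+[z,[\![x,y,w]\!]]$; (4) $[\![x,y,[\![z,w,t]\!]]\!]=[\![[\![x,y,z]\!],w,t]\!]+[\![z,[\![x,y,w]\!],t]\!]+[\![z,w,[\![x,y,t]\!]]\!]$. A symplectic structure on it is a nondegenerate skew-symmetric bilinear form $\omega$ with $\omega(x,[y,z])+\omega(y,[z,x])+\omega(z,[x,y])=0$ and $\omega(z,[\![x,y,w]\!])-\omega(x,[\![w,z,y]\!])+\omega(y,[\![w,z,x]\!])-\omega(w,[\![x,y,z]\!])=0$. On $\mathfrak h\oplus\mathfrak h^*$ let $\omega_p(x+\alpha,y+\beta)=\langle\alpha,y\rangle-\langle\beta,x\rangle$.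 A phase space of $\mathfrak h$ is a Lie-Yamaguti algebra structure on $\mathfrak h\oplus\mathfrak h^*$ for which $\omega_p$ is a symplectic structure and such that $\mathfrak h$ (with its original brackets, i.e. the brackets restrict to $[\cdot,\cdot]_{\mathfrak h},[\![\cdot,\cdot,\cdot]\!]_{\mathfrak h}$) and $\mathfrak h^*$ are Lie-Yamaguti subalgebras. A pre-Lie-Yamaguti algebra is a vector space $A$ with a bilinear operation $*$ and a trilinear operation $\{\cdot,\cdot,\cdot\}$ such that, writing $[x,y]_C=x*y-y*x$, $(x,y,z)=(x*y)*z-x*(y*z)$ and $\{x,y,z\}_D=\{z,y,x\}-\{z,x,y\}+(y,x,z)-(x,y,z)$, for all $x,y,z,w,t\in A$: (P1) $\{z,[x,y]_C,w\}-\{y*z,x,w\}+\{x*z,y,w\}=0$; (P2) $\{x,y,[z,w]_C\}=z*\{x,y,w\}-w*\{x,y,z\}$; (P3) $\{\{x,y,z\},w,t\}-\{\{x,y,w\},z,t\}-\{x,y,\{z,w,t\}_D\}-\{x,y,\{z,w,t\}\}+\{x,y,\{w,z,t\}\}+\{z,w,\{x,y,t\}\}_D=0$; (P4) $\{z,\{x,y,w\}_D,t\}+\{z,\{x,y,w\},t\}-\{z,\{y,x,w\},t\}+\{z,w,\{x,y,t\}_D\}+\{z,w,\{x,y,t\}\}-\{z,w,\{y,x,t\}\}=\{x,y,\{z,w,t\}\}_D-\{\{x,y,z\}_D,w,t\}$; (P5) $\{x,y,z\}_D*w+\{x,y,z\}*w-\{y,x,z\}*w=\{x,y,z*w\}_D-z*\{x,y,w\}_D$.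 Its subadjacent Lie-Yamaguti algebra has brackets $[x,y]_C$ and $[\![x,y,z]\!]_C=\{x,y,z\}_D+\{x,y,z\}-\{y,x,z\}$. *)

From HB Require Import structures.
From mathcomp Require Import all_boot all_order all_algebra.
Set Implicit Arguments. Unset Strict Implicit. Unset Printing Implicit Defensive.
Import GRing.Theory.
Local Open Scope ring_scope.

Section Multilin.
Variables (F : fieldType) (T X : lmodType F).

Definition bilin (f : T -> T -> X) : Prop :=
  (forall (a : F) x x' y, f (a *: x + x') y = a *: f x y + f x' y) /\
  (forall (a : F) x y y', f x (a *: y + y') = a *: f x y + f x y').

Definition trilin (f : T -> T -> T -> X) : Prop :=
  (forall (a : F) x x' y z, f (a *: x + x') y z = a *: f x y z + f x' y z) /\
  (forall (a : F) x y y' z, f x (a *: y + y') z = a *: f x y z + f x y' z) /\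
  (forall (a : F) x y z z', f x y (a *: z + z') = a *: f x y z + f x y z').
End Multilin.

Definition is_LY (F : fieldType) (T : lmodType F)
  (br : T -> T -> T) (tr : T -> T -> T -> T) : Prop :=
  bilin br /\ trilin tr /\
  (forall x y, br x y = - br y x) /\
  (forall x y z, tr x y z = - tr y x z) /\
  (forall x y z, br (br x y) z + br (br y z) x + br (br z x) y
                 + tr x y z + tr y z x + tr z x y = 0) /\
  (forall x y z w, tr (br x y) z w + tr (br y z) x w + tr (br z x) y w = 0) /\
  (forall x y z w, tr x y (br z w) = br (tr x y z) w + br z (tr x y w)) /\
  (forall x y z w t, tr x y (tr z w t)
      = tr (tr x y z) w t + tr z (tr x y w) t + tr z w (tr x y t)).

Definition is_symplectic (F : fieldType) (T : lmodType F)
  (br : T -> T -> T) (tr : T -> T -> T -> T) (om : T -> T -> F) : Prop :=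
  bilin (X := F^o) om /\
  (forall x y, om x y = - om y x) /\
  (forall x, (forall y, om x y = 0) -> x = 0) /\
  (forall x y z, om x (br y z) + om y (br z x) + om z (br x y) = 0) /\
  (forall x y z w, om z (tr x y w) - om x (tr w z y) + om y (tr w z x)
                   - om w (tr x y z) = 0).

Definition dual (F : fieldType) (V : vectType F) := 'Hom(V, F^o).
Definition dsum (F : fieldType) (V : vectType F) := (V * dual V)%type.

Definition omega_p (F : fieldType) (V : vectType F) (u v : dsum V) : F :=
  (u.2 v.1 : F) - (v.2 u.1 : F).

Definition is_phase_space (F : fieldType) (V : vectType F)
  (br : V -> V -> V) (tr : V -> V -> V -> V)
  (Br : dsum V -> dsum V -> dsum V)
  (Tr : dsum V -> dsum V -> dsum V -> dsum V) : Prop :=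
  is_LY Br Tr /\ is_symplectic Br Tr (@omega_p F V) /\
  (forall x y : V, Br (x, 0) (y, 0) = (br x y, 0)) /\
  (forall x y z : V, Tr (x, 0) (y, 0) (z, 0) = (tr x y z, 0)) /\
  (* h^* is a subalgebra *)
  (forall a b : dual V, (Br (0, a) (0, b)).1 = 0) /\
  (forall a b c : dual V, (Tr (0, a) (0, b) (0, c)).1 = 0).

Definition has_phase_space (F : fieldType) (V : vectType F)
  (br : V -> V -> V) (tr : V -> V -> V -> V) : Prop :=
  exists Br Tr, @is_phase_space F V br tr Br Tr.

Section PreLY.
Variables (F : fieldType) (A : lmodType F)
  (mul : A -> A -> A) (brc : A -> A -> A -> A).

Definition comC x y := mul x y - mul y x.
Definition assoc x y z := mul (mul x y) z - mul x (mul y z).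
Definition brcD x y z := brc z y x - brc z x y + assoc y x z - assoc x y z.

Definition is_preLY : Prop :=
  bilin mul /\ trilin brc /\
  (forall x y z w, brc z (comC x y) w - brc (mul y z) x w + brc (mul x z) y w = 0) /\
  (forall x y z w, brc x y (comC z w) = mul z (brc x y w) - mul w (brc x y z)) /\
  (forall x y z w t, brc (brc x y z) w t - brc (brc x y w) z t
      - brc x y (brcD z w t) - brc x y (brc z w t) + brc x y (brc w z t)
      + brcD z w (brc x y t) = 0) /\
  (forall x y z w t, brc z (brcD x y w) t + brc z (brc x y w) t - brc z (brc y x w) t
      + brc z w (brcD x y t) + brc z w (brc x y t) - brc z w (brc y x t)
      = brcD x y (brc z w t) - brc (brcD x y z) w t) /\
  (forall x y z w, mul (brcD x y z) w + mul (brc x y z) w - mul (brc y x z) w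
      = brcD x y (mul z w) - mul z (brcD x y w)).

Definition trC x y z := brcD x y z + brc x y z - brc y x z.
End PreLY.

(* Write <a, x> for the value [a x] of a : h^* at x : h. If (Br, Tr) is a phase
   space of h, the h^*-components of brackets with exactly one argument in h^*
   define operators rho(x) and mu(y, z) on h^*, and the Lie-Yamaguti identities of
   (Br, Tr) at such arguments are Yamaguti's axioms saying that they form a
   representation of h. Transposing them, <a, x * y> = - <rho(x) a, y> and
   <a, {x, y, z}> = <mu(z, y) a, x> define a pre-Lie-Yamaguti structure, and the
   two closedness conditions of omega_p say exactly that its subadjacent brackets
   are those of h. Conversely, a compatible pre-Lie-Yamaguti structure gives by the
   same formulas a representation of h on h^*, and the semidirect product of h with
   this representation is a phase space. *)

From HB Require Import structures.
From mathcomp Require Import all_boot all_order all_algebra.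
From mathcomp Require Import ring.
Set Implicit Arguments. Unset Strict Implicit. Unset Printing Implicit Defensive.
Import GRing.Theory.
Local Open Scope ring_scope.

Section LinearFor.
Variables (F : fieldType) (U W : lmodType F) (f : U -> W) (f_lin : linear f).

Lemma linear_forD x y : f (x + y) = f x + f y.
Proof. by rewrite -[x in LHS]scale1r f_lin scale1r. Qed.
Lemma linear_for0 : f 0 = 0.
Proof. by apply: (addrI (f 0)); rewrite -linear_forD !addr0. Qed.
Lemma linear_forZ k x : f (k *: x) = k *: f x.
Proof. by rewrite -[k *: x]addr0 f_lin linear_for0 addr0. Qed.
Lemma linear_forN x : f (- x) = - f x.
Proof. by rewrite -scaleN1r linear_forZ scaleN1r. Qed.
End LinearFor.

Section Multilinear.
Variables (F : fieldType) (T X : lmodType F).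

Section Bilinear.
Variables (f : T -> T -> X) (f_bilin : bilin f).

Lemma bilin_linearl y : linear (f^~ y).
Proof. by move=> k x x'; apply: f_bilin.1. Qed.
Lemma bilin_linearr x : linear (f x).
Proof. by move=> k y y'; apply: f_bilin.2. Qed.

Lemma bilinDl x x' y : f (x + x') y = f x y + f x' y.
Proof. exact: linear_forD (bilin_linearl y) x x'. Qed.
Lemma bilin0l y : f 0 y = 0.
Proof. exact: linear_for0 (bilin_linearl y). Qed.
Lemma bilinZl k x y : f (k *: x) y = k *: f x y.
Proof. exact: linear_forZ (bilin_linearl y) k x. Qed.
Lemma bilinNl x y : f (- x) y = - f x y.
Proof. exact: linear_forN (bilin_linearl y) x. Qed.
Lemma bilinDr x y y' : f x (y + y') = f x y + f x y'.
Proof. exact: linear_forD (bilin_linearr x) y y'. Qed.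
Lemma bilinZr k x y : f x (k *: y) = k *: f x y.
Proof. exact: linear_forZ (bilin_linearr x) k y. Qed.
Lemma bilinNr x y : f x (- y) = - f x y.
Proof. exact: linear_forN (bilin_linearr x) y. Qed.
End Bilinear.

Section Trilinear.
Variables (f : T -> T -> T -> X) (f_trilin : trilin f).

Lemma trilin_bilin12 z : bilin (fun x y => f x y z).
Proof. by split=> *; [apply: f_trilin.1 | apply: f_trilin.2.1]. Qed.
Lemma trilin_bilin23 x : bilin (f x).
Proof. by split=> *; [apply: f_trilin.2.1 | apply: f_trilin.2.2]. Qed.

Lemma trilinD1 x x' y z : f (x + x') y z = f x y z + f x' y z.
Proof. exact: (bilinDl (trilin_bilin12 z)). Qed.
Lemma trilin01 y z : f 0 y z = 0.
Proof. exact: (bilin0l (trilin_bilin12 z)). Qed.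
Lemma trilinZ1 k x y z : f (k *: x) y z = k *: f x y z.
Proof. exact: (bilinZl (trilin_bilin12 z)). Qed.
Lemma trilinN1 x y z : f (- x) y z = - f x y z.
Proof. exact: (bilinNl (trilin_bilin12 z)). Qed.
Lemma trilinD2 x y y' z : f x (y + y') z = f x y z + f x y' z.
Proof. exact: (bilinDl (trilin_bilin23 x)). Qed.
Lemma trilinZ2 k x y z : f x (k *: y) z = k *: f x y z.
Proof. exact: (bilinZl (trilin_bilin23 x)). Qed.
Lemma trilinN2 x y z : f x (- y) z = - f x y z.
Proof. exact: (bilinNl (trilin_bilin23 x)). Qed.
Lemma trilinD3 x y z z' : f x y (z + z') = f x y z + f x y z'.
Proof. exact: (bilinDr (trilin_bilin23 x)). Qed.
Lemma trilinZ3 k x y z : f x y (k *: z) = k *: f x y z.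
Proof. exact: (bilinZr (trilin_bilin23 x)). Qed.
Lemma trilinN3 x y z : f x y (- z) = - f x y z.
Proof. exact: (bilinNr (trilin_bilin23 x)). Qed.
End Trilinear.
End Multilinear.

Lemma brcD_trC (F : fieldType) (A : lmodType F) (mul : A -> A -> A)
    (brc : A -> A -> A -> A) x y z :
  brcD mul brc x y z = trC mul brc x y z - brc x y z + brc y x z.
Proof. by rewrite /trC [_ - brc y x z - _]addrAC addrK subrK. Qed.

Lemma scale_regularE (F : fieldType) (k u : F) : k *: (u : F^o) = k * u.
Proof. by []. Qed.

Section Duality.
Variables (F : fieldType) (V : vectType F).
Local Notation n := (\dim (fullv : {vspace V})).
Local Notation e := (vbasis (fullv : {vspace V})).

Definition coord_dual (i : 'I_n) : dual V := linfun (coord e i : V -> F^o).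

Lemma coord_dualE i v : coord_dual i v = coord e i v.
Proof. by rewrite lfunE. Qed.

Lemma vbasis_expansion v : v = \sum_(i < n) coord e i v *: e`_i.
Proof. exact: coord_vbasis (memvf v). Qed.

Lemma dual_expansion (a : dual V) : a = \sum_(i < n) a e`_i *: coord_dual i.
Proof.
apply/lfunP => v; rewrite sum_lfunE {1}(vbasis_expansion v) linear_sum.
by apply: eq_bigr => i _; rewrite linearZ scale_lfunE coord_dualE; apply: mulrC.
Qed.

Lemma dualD (a : dual V) x y : a (x + y) = a x + a y. Proof. exact: linearD. Qed.
Lemma dualN (a : dual V) x : a (- x) = - a x. Proof. exact: linearN. Qed.
Lemma dualZ (a : dual V) k x : a (k *: x) = k * a x. Proof. exact: linearZ. Qed.
Lemma dual0 (a : dual V) : a 0 = 0. Proof. exact: linear0. Qed.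

Lemma dual_ext u v : (forall a : dual V, a u = a v) -> u = v.
Proof.
move=> eq_uv; rewrite (vbasis_expansion u) (vbasis_expansion v).
by apply: eq_bigr => i _; rewrite -!coord_dualE eq_uv.
Qed.

Definition dual_of_fun (f : V -> F) : dual V := \sum_(i < n) f e`_i *: coord_dual i.

Lemma dual_of_funE f : linear_for *%R f -> forall v, dual_of_fun f v = f v.
Proof.
move=> f_linear v; have f_lin : linear (f : V -> F^o) := f_linear.
rewrite sum_lfunE {2}(vbasis_expansion v).
rewrite (big_morph f (linear_forD f_lin) (linear_for0 f_lin)).
apply: eq_bigr => i _.
by rewrite scale_lfunE coord_dualE (linear_forZ f_lin) !scale_regularE mulrC.
Qed.

Definition vec_of_bidual (phi : dual V -> F) : V := \sum_(i < n) phi (coord_dual i) *: e`_i.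

Lemma vec_of_bidualE phi :
  linear_for *%R phi -> forall a : dual V, a (vec_of_bidual phi) = phi a.
Proof.
move=> phi_linear a; have phi_lin : linear (phi : dual V -> F^o) := phi_linear.
rewrite linear_sum {2}(dual_expansion a).
rewrite (big_morph phi (linear_forD phi_lin) (linear_for0 phi_lin)).
by apply: eq_bigr => i _; rewrite linearZ (linear_forZ phi_lin) !scale_regularE mulrC.
Qed.
End Duality.

(* [lincomb E] proves [c = d] in a commutative ring when [c - d] is [+/-] the
   difference of the two sides of [E], and [lincomb2] when it is a signed sum of two
   such differences; the [lfun_] variants first evaluate equations between
   functionals at a point. *)
Ltac move_to_lhs E := move/eqP: E; rewrite -subr_eq0 => /eqP E.

Ltac lincomb E :=
  move_to_lhs E; apply/eqP; rewrite -subr_eq0; apply/eqP;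
  match type of E with ?e = 0 =>
    first [ transitivity e; [ring | exact: E]
          | transitivity (- e); [ring | by rewrite E oppr0] ] end.

Ltac lincomb2 E1 E2 :=
  move_to_lhs E1; move_to_lhs E2; apply/eqP; rewrite -subr_eq0; apply/eqP;
  match type of E1 with ?e1 = 0 => match type of E2 with ?e2 = 0 =>
    first [ transitivity (e1 + e2); [ring | by rewrite E1 E2 addr0]
          | transitivity (e1 - e2); [ring | by rewrite E1 E2 subr0]
          | transitivity (- e1 + e2); [ring | by rewrite E1 E2 oppr0 addr0]
          | transitivity (- e1 - e2); [ring | by rewrite E1 E2 !oppr0 addr0] ] end end.

Ltac lfun_eval := rewrite ?(add_lfunE, opp_lfunE, scale_lfunE, zero_lfunE, scale_regularE).

Ltac lfun_lincomb E :=
  let t := fresh "t" in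
  apply/lfunP => t; move/(congr1 (fun h => fun_of_lfun h t)): E; lfun_eval => E; lincomb E.

Ltac lfun_lincomb2 E1 E2 :=
  let t := fresh "t" in
  apply/lfunP => t; move/(congr1 (fun h => fun_of_lfun h t)): E1;
  move/(congr1 (fun h => fun_of_lfun h t)): E2; lfun_eval => E2 E1; lincomb2 E1 E2.

Section DirectSum.
Variables (F : fieldType) (V : vectType F).
Local Notation vec x := ((x, 0) : dsum V).
Local Notation cov a := ((0, a) : dsum V).

Lemma dsum_split (u : dsum V) : u = vec u.1 + cov u.2.
Proof. by case: u => x a; congr pair; rewrite /= ?addr0 ?add0r. Qed.

Lemma vec_linear k (x y : V) : vec (k *: x + y) = k *: vec x + vec y.
Proof. by congr pair; rewrite /= scaler0 addr0. Qed.

Lemma cov_linear k (a b : dual V) : cov (k *: a + b) = k *: cov a + cov b.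
Proof. by congr pair; rewrite /= scaler0 addr0. Qed.

Lemma cov_opp (a : dual V) : cov (- a) = - cov a.
Proof. by congr pair; rewrite /= oppr0. Qed.

Lemma omega_p_bilin : bilin (X := F^o) (@omega_p F V).
Proof.
split=> k [x a] [x' a'] [y b]; rewrite /omega_p /=; lfun_eval;
  rewrite ?(dualD, dualZ) ?scale_regularE; ring.
Qed.

Lemma omega_p_skew (u v : dsum V) : omega_p u v = - omega_p v u.
Proof. by rewrite /omega_p opprB. Qed.

Lemma omega_p_nondeg (u : dsum V) : (forall v, omega_p u v = 0) -> u = 0.
Proof.
case: u => x a omega_u0; have x0 : x = 0.
  apply: dual_ext => b; move: (omega_u0 (0, b)); rewrite /omega_p /= !dual0 add0r.
  by move/eqP; rewrite oppr_eq0 => /eqP.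
rewrite x0; congr pair; apply/lfunP => y; move: (omega_u0 (y, 0)).
by rewrite /omega_p /= x0 zero_lfunE subr0 zero_lfunE.
Qed.
End DirectSum.

Section PhaseSpaceToPreLY.
Variables (F : fieldType) (V : vectType F) (br : V -> V -> V) (tr : V -> V -> V -> V)
  (Br : dsum V -> dsum V -> dsum V) (Tr : dsum V -> dsum V -> dsum V -> dsum V).
Hypothesis phase : is_phase_space br tr Br Tr.

Local Notation vec x := ((x, 0) : dsum V).
Local Notation cov a := ((0, a) : dsum V).

Let Br_bilin : bilin Br := phase.1.1.
Let Tr_trilin : trilin Tr := phase.1.2.1.
Let Br_skew : forall u v, Br u v = - Br v u := phase.1.2.2.1.
Let Tr_skew : forall u v w, Tr u v w = - Tr v u w := phase.1.2.2.2.1.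
Let Br_jacobi : forall u v w, Br (Br u v) w + Br (Br v w) u + Br (Br w u) v
  + Tr u v w + Tr v w u + Tr w u v = 0 := phase.1.2.2.2.2.1.
Let Tr_Br_cyclic : forall u v w s,
  Tr (Br u v) w s + Tr (Br v w) u s + Tr (Br w u) v s = 0 := phase.1.2.2.2.2.2.1.
Let Tr_der_Br : forall u v w s, Tr u v (Br w s) = Br (Tr u v w) s + Br w (Tr u v s)
  := phase.1.2.2.2.2.2.2.1.
Let Tr_der_Tr : forall u v w s r, Tr u v (Tr w s r)
  = Tr (Tr u v w) s r + Tr w (Tr u v s) r + Tr w s (Tr u v r) := phase.1.2.2.2.2.2.2.2.
Let omega_Br : forall u v w,
  omega_p u (Br v w) + omega_p v (Br w u) + omega_p w (Br u v) = 0 := phase.2.1.2.2.2.1.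
Let omega_Tr : forall u v w s, omega_p w (Tr u v s) - omega_p u (Tr s w v)
  + omega_p v (Tr s w u) - omega_p s (Tr u v w) = 0 := phase.2.1.2.2.2.2.
Let Br_vec : forall x y, Br (vec x) (vec y) = vec (br x y) := phase.2.2.1.
Let Tr_vec : forall x y z, Tr (vec x) (vec y) (vec z) = vec (tr x y z) := phase.2.2.2.1.

Definition ps_rho x a : dual V := (Br (vec x) (cov a)).2.
Definition ps_mu y z a : dual V := (Tr (cov a) (vec y) (vec z)).2.
Definition ps_D x y a : dual V := (Tr (vec x) (vec y) (cov a)).2.

Lemma snd_Br_vecl x u : (Br (vec x) u).2 = ps_rho x u.2.
Proof. by rewrite {1}(dsum_split u) (bilinDr Br_bilin) Br_vec /= add0r. Qed.
Lemma snd_Br_vecr u y : (Br u (vec y)).2 = - ps_rho y u.2.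
Proof. by rewrite Br_skew /= snd_Br_vecl. Qed.
Lemma snd_Tr_vec23 u y z : (Tr u (vec y) (vec z)).2 = ps_mu y z u.2.
Proof. by rewrite {1}(dsum_split u) (trilinD1 Tr_trilin) Tr_vec /= add0r. Qed.
Lemma snd_Tr_vec13 x u z : (Tr (vec x) u (vec z)).2 = - ps_mu x z u.2.
Proof. by rewrite Tr_skew /= snd_Tr_vec23. Qed.
Lemma snd_Tr_vec12 x y u : (Tr (vec x) (vec y) u).2 = ps_D x y u.2.
Proof. by rewrite {1}(dsum_split u) (trilinD3 Tr_trilin) Tr_vec /= add0r. Qed.

Lemma ps_rho_linear x : linear (ps_rho x).
Proof. by move=> k a b; rewrite /ps_rho cov_linear Br_bilin.2. Qed.
Lemma ps_rho_linearl a : linear (fun x => ps_rho x a).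
Proof. by move=> k x y /=; rewrite /ps_rho vec_linear Br_bilin.1. Qed.
Lemma ps_mu_linear y z : linear (ps_mu y z).
Proof. by move=> k a b; rewrite /ps_mu cov_linear Tr_trilin.1. Qed.
Lemma ps_mu_linear1 z a : linear (fun y => ps_mu y z a).
Proof. by move=> k x y /=; rewrite /ps_mu vec_linear Tr_trilin.2.1. Qed.
Lemma ps_mu_linear2 y a : linear (fun z => ps_mu y z a).
Proof. by move=> k z z' /=; rewrite /ps_mu vec_linear Tr_trilin.2.2. Qed.

Lemma ps_rhoN x a : ps_rho x (- a) = - ps_rho x a.
Proof. by rewrite /ps_rho cov_opp (bilinNr Br_bilin). Qed.
Lemma ps_muN y z a : ps_mu y z (- a) = - ps_mu y z a.
Proof. by rewrite /ps_mu cov_opp (trilinN1 Tr_trilin). Qed.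

Ltac snd_simpl := rewrite /= ?(Br_vec, Tr_vec, snd_Br_vecl, snd_Br_vecr, snd_Tr_vec23,
  snd_Tr_vec13, snd_Tr_vec12) /=.

Lemma ps_D_def x y a : ps_D x y a = - ps_rho (br x y) a + ps_rho x (ps_rho y a)
  - ps_rho y (ps_rho x a) + ps_mu y x a - ps_mu x y a.
Proof.
have := congr1 snd (Br_jacobi (vec x) (vec y) (cov a)); snd_simpl; rewrite ps_rhoN => E.
lfun_lincomb E.
Qed.

Lemma ps_mu_brl y z w a :
  ps_mu (br z w) y a = ps_mu z y (ps_rho w a) - ps_mu w y (ps_rho z a).
Proof.
have := congr1 snd (Tr_Br_cyclic (vec z) (vec w) (cov a) (vec y)); snd_simpl.
rewrite ps_muN => E; lfun_lincomb E.
Qed.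

Lemma ps_mu_brr w x y a :
  ps_mu w (br x y) a = - ps_rho y (ps_mu w x a) + ps_rho x (ps_mu w y a).
Proof.
have := congr1 snd (Tr_der_Br (cov a) (vec w) (vec x) (vec y)); snd_simpl => E.
lfun_lincomb E.
Qed.

Lemma ps_D_rho x y z a :
  ps_D x y (ps_rho z a) = ps_rho (tr x y z) a + ps_rho z (ps_D x y a).
Proof.
have := congr1 snd (Tr_der_Br (vec x) (vec y) (vec z) (cov a)); snd_simpl => E.
lfun_lincomb E.
Qed.

Lemma ps_mu_trr y z w t a : ps_mu y (tr z w t) a
  = ps_mu w t (ps_mu y z a) - ps_mu z t (ps_mu y w a) + ps_D z w (ps_mu y t a).
Proof.
have := congr1 snd (Tr_der_Tr (cov a) (vec y) (vec z) (vec w) (vec t)); snd_simpl => E.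
lfun_lincomb E.
Qed.

Lemma ps_D_mu x y w t a : ps_D x y (ps_mu w t a)
  = ps_mu w t (ps_D x y a) + ps_mu (tr x y w) t a + ps_mu w (tr x y t) a.
Proof.
have := congr1 snd (Tr_der_Tr (vec x) (vec y) (cov a) (vec w) (vec t)); snd_simpl => E.
lfun_lincomb E.
Qed.

Lemma ps_mu_trl z w t y a : ps_mu (tr z w t) y a
  = ps_mu z y (ps_mu t w a) - ps_mu w y (ps_mu t z a) - ps_mu t y (ps_D z w a).
Proof.
have E1 := ps_D_mu z w t y a; have E2 := ps_mu_trr t z w y a.
lfun_lincomb2 E1 E2.
Qed.

Definition ps_mul x y : V := vec_of_bidual (fun a => - ps_rho x a y).
Definition ps_brc x y z : V := vec_of_bidual (fun a => ps_mu z y a x).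

Lemma ps_mulE (a : dual V) x y : a (ps_mul x y) = - ps_rho x a y.
Proof.
by apply: vec_of_bidualE => k b c; rewrite ps_rho_linear; lfun_eval; ring.
Qed.

Lemma ps_brcE (a : dual V) x y z : a (ps_brc x y z) = ps_mu z y a x.
Proof. by apply: vec_of_bidualE => k b c; rewrite ps_mu_linear; lfun_eval. Qed.

Lemma ps_mul_bilin : bilin ps_mul.
Proof.
split=> k x y z; apply: dual_ext => a; rewrite dualD dualZ !ps_mulE.
  by rewrite ps_rho_linearl; lfun_eval; ring.
by rewrite dualD dualZ; ring.
Qed.

Lemma ps_brc_trilin : trilin ps_brc.
Proof.
split; [|split] => k x y z w; apply: dual_ext => a; rewrite dualD dualZ !ps_brcE.
- by rewrite dualD dualZ.
- by rewrite ps_mu_linear2; lfun_eval.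
- by rewrite ps_mu_linear1; lfun_eval.
Qed.

Lemma ps_comC x y : comC ps_mul x y = br x y.
Proof.
apply: dual_ext => a; rewrite dualD dualN !ps_mulE.
have := omega_Br (cov a) (vec x) (vec y); rewrite /omega_p; snd_simpl.
by lfun_eval; rewrite ?dual0 => E; lincomb E.
Qed.

Lemma ps_brcDE (a : dual V) x y z : a (brcD ps_mul ps_brc x y z) = - ps_D x y a z.
Proof.
have rho_br : ps_rho (br x y) a = ps_rho (ps_mul x y) a - ps_rho (ps_mul y x) a.
  by rewrite -ps_comC (zmod_morphism_linear (ps_rho_linearl a)).
rewrite /brcD /assoc !(dualD, dualN) !ps_brcE !ps_mulE ps_D_def rho_br.
by lfun_eval; ring.
Qed.

Lemma ps_trC x y z : trC ps_mul ps_brc x y z = tr x y z.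
Proof.
apply: dual_ext => a; rewrite /trC dualD dualN dualD ps_brcDE !ps_brcE.
have := omega_Tr (vec x) (vec y) (vec z) (cov a); rewrite /omega_p; snd_simpl.
by lfun_eval; rewrite ?dual0 => E; lincomb E.
Qed.

Lemma ps_brcD x y z : brcD ps_mul ps_brc x y z = tr x y z - ps_brc x y z + ps_brc y x z.
Proof. by rewrite brcD_trC ps_trC. Qed.

Lemma ps_is_preLY : is_preLY ps_mul ps_brc.
Proof.
have [mul_bilin brc_trilin] := (ps_mul_bilin, ps_brc_trilin).
split; [exact: mul_bilin | split; [exact: brc_trilin | ]].
split.
  move=> x y z w; rewrite ps_comC; apply: dual_ext => a.
  rewrite dual0 !(dualD, dualN) !(ps_brcE, ps_mulE) ps_mu_brr.
  by lfun_eval; ring.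
split.
  move=> x y z w; rewrite ps_comC; apply: dual_ext => a.
  rewrite !(dualD, dualN) !(ps_brcE, ps_mulE) ps_mu_brl.
  by lfun_eval; ring.
split.
  move=> x y z w t.
  rewrite (ps_brcD z w t) !(trilinD3 brc_trilin, trilinN3 brc_trilin).
  (* [brcD] enters only through [ps_brcDE]; abstracting it keeps [dualD] from
     unfolding it. *)
  move: (ps_brcDE); move: (brcD ps_mul ps_brc) => bD bDE; apply: dual_ext => a.
  rewrite dual0 !(dualD, dualN) !(bDE, ps_brcE) ps_mu_trl.
  by lfun_eval; ring.
split.
  move=> x y z w t; rewrite (ps_brcD x y w) (ps_brcD x y t).
  rewrite !(trilinD2 brc_trilin, trilinN2 brc_trilin).
  rewrite !(trilinD3 brc_trilin, trilinN3 brc_trilin).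
  move: (ps_brcDE); move: (brcD ps_mul ps_brc) => bD bDE; apply: dual_ext => a.
  rewrite !(dualD, dualN) !(bDE, ps_brcE) ps_D_mu.
  by lfun_eval; ring.
move=> x y z w; rewrite (ps_brcD x y z) !(bilinDl mul_bilin, bilinNl mul_bilin).
move: (ps_brcDE); move: (brcD ps_mul ps_brc) => bD bDE; apply: dual_ext => a.
rewrite !(dualD, dualN) !(bDE, ps_mulE) ps_D_rho.
by lfun_eval; ring.
Qed.

End PhaseSpaceToPreLY.

Section SemidirectProduct.
Variables (F : fieldType) (V : vectType F) (br : V -> V -> V) (tr : V -> V -> V -> V)
  (rho : V -> dual V -> dual V) (mu : V -> V -> dual V -> dual V).
Hypothesis LY : is_LY br tr.
Hypothesis rho_linear : forall x, linear (rho x).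
Hypothesis rho_linearl : forall a, linear (fun x => rho x a).
Hypothesis mu_linear : forall y z, linear (mu y z).
Hypothesis mu_linear1 : forall z a, linear (fun y => mu y z a).
Hypothesis mu_linear2 : forall y a, linear (fun z => mu y z a).

(* Locked, so that rewriting with the additivity of [rep_D x y] cannot unfold an
   inner [rep_D]. *)
Fact rep_D_key : unit. Proof. exact: tt. Qed.
Definition rep_D : V -> V -> dual V -> dual V := locked_with rep_D_key (fun x y a =>
  - rho (br x y) a + rho x (rho y a) - rho y (rho x a) + mu y x a - mu x y a).

Lemma rep_DE x y a : rep_D x y a
  = - rho (br x y) a + rho x (rho y a) - rho y (rho x a) + mu y x a - mu x y a.
Proof. by rewrite /rep_D unlock. Qed.

(* Yamaguti's axioms for the representation (rho, mu) of (V, br, tr) on [dual V]. *)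
Hypothesis mu_brl : forall y z w a,
  mu (br z w) y a = mu z y (rho w a) - mu w y (rho z a).
Hypothesis mu_brr : forall w x y a,
  mu w (br x y) a = - rho y (mu w x a) + rho x (mu w y a).
Hypothesis D_rho : forall x y z a,
  rep_D x y (rho z a) = rho (tr x y z) a + rho z (rep_D x y a).
Hypothesis D_mu : forall x y w t a, rep_D x y (mu w t a)
  = mu w t (rep_D x y a) + mu (tr x y w) t a + mu w (tr x y t) a.
Hypothesis mu_trl : forall z w t y a, mu (tr z w t) y a
  = mu z y (mu t w a) - mu w y (mu t z a) - mu t y (rep_D z w a).

Let br_bilin : bilin br := LY.1.
Let tr_trilin : trilin tr := LY.2.1.
Let br_skew : forall x y, br x y = - br y x := LY.2.2.1.
Let tr_skew : forall x y z, tr x y z = - tr y x z := LY.2.2.2.1.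
Let br_jacobi : forall x y z, br (br x y) z + br (br y z) x + br (br z x) y
  + tr x y z + tr y z x + tr z x y = 0 := LY.2.2.2.2.1.
Let tr_br_cyclic : forall x y z w,
  tr (br x y) z w + tr (br y z) x w + tr (br z x) y w = 0 := LY.2.2.2.2.2.1.
Let tr_der_br : forall x y z w, tr x y (br z w) = br (tr x y z) w + br z (tr x y w)
  := LY.2.2.2.2.2.2.1.
Let tr_der_tr : forall x y z w t, tr x y (tr z w t)
  = tr (tr x y z) w t + tr z (tr x y w) t + tr z w (tr x y t) := LY.2.2.2.2.2.2.2.

Let rhoD x a b : rho x (a + b) = rho x a + rho x b := linear_forD (rho_linear x) a b.
Let rhoN x a : rho x (- a) = - rho x a := linear_forN (rho_linear x) a.
Let rhoDl x x' a : rho (x + x') a = rho x a + rho x' a := linear_forD (rho_linearl a) x x'.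
Let rhoNl x a : rho (- x) a = - rho x a := linear_forN (rho_linearl a) x.
Let rho0l a : rho 0 a = 0 := linear_for0 (rho_linearl a).
Let muD y z a b : mu y z (a + b) = mu y z a + mu y z b := linear_forD (mu_linear y z) a b.
Let muN y z a : mu y z (- a) = - mu y z a := linear_forN (mu_linear y z) a.

Lemma rep_D_linear x y : linear (rep_D x y).
Proof.
move=> k a b; apply/lfunP => t; rewrite !rep_DE.
rewrite rho_linear !mu_linear !rho_linear; lfun_eval; ring.
Qed.

Let DD x y a b : rep_D x y (a + b) = rep_D x y a + rep_D x y b
  := linear_forD (rep_D_linear x y) a b.
Let DN x y a : rep_D x y (- a) = - rep_D x y a := linear_forN (rep_D_linear x y) a.

Let rhoZl k x x' a : rho (k *: x + x') a = k *: rho x a + rho x' a := rho_linearl a k x x'.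
Let muZ1 k y y' z a : mu (k *: y + y') z a = k *: mu y z a + mu y' z a
  := mu_linear1 z a k y y'.
Let muZ2 k y z z' a : mu y (k *: z + z') a = k *: mu y z a + mu y z' a
  := mu_linear2 y a k z z'.

Lemma rep_D_linear1 y a : linear (fun x => rep_D x y a).
Proof.
move=> k x x' /=; apply/lfunP => t; rewrite !rep_DE br_bilin.1.
rewrite !rhoZl !rho_linear muZ1 muZ2; lfun_eval; ring.
Qed.

Lemma rep_D_skew x y a : rep_D y x a = - rep_D x y a.
Proof. by apply/lfunP => t; rewrite !rep_DE (br_skew y x) rhoNl; lfun_eval; ring. Qed.

Lemma mu_trr y z w t a : mu y (tr z w t) a
  = mu w t (mu y z a) - mu z t (mu y w a) + rep_D z w (mu y t a).
Proof.
have E1 := D_mu z w y t a; have E2 := mu_trl z w y t a.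
lfun_lincomb2 E1 E2.
Qed.

Lemma D_D x y z w a : rep_D x y (rep_D z w a)
  = rep_D (tr x y z) w a + rep_D z (tr x y w) a + rep_D z w (rep_D x y a).
Proof.
rewrite (rep_DE z w a) (rep_DE (tr x y z) w a) (rep_DE z (tr x y w) a).
rewrite (rep_DE z w (rep_D x y a)) !(DD, DN, D_rho, D_mu) tr_der_br rhoDl.
by apply/lfunP => t; rewrite ?(rhoD, rhoN, muD, muN); lfun_eval; ring.
Qed.

Lemma D_br_cyclic x y z a :
  rep_D (br x y) z a + rep_D (br y z) x a + rep_D (br z x) y a = 0.
Proof.
have rho_tr p q r b : rho (tr p q r) b = rep_D p q (rho r b) - rho r (rep_D p q b).
  by rewrite D_rho addrK.
have := congr1 (rho^~ a) (br_jacobi x y z); rewrite /= !rhoDl rho0l !rho_tr !rep_DE.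
rewrite ?(rhoD, rhoN, muD, muN) => E.
rewrite ?(mu_brl, mu_brr); lfun_lincomb E.
Qed.

Definition sd_br (u v : dsum V) : dsum V := (br u.1 v.1, rho u.1 v.2 - rho v.1 u.2).
Definition sd_tr (u v w : dsum V) : dsum V :=
  (tr u.1 v.1 w.1, mu v.1 w.1 u.2 - mu u.1 w.1 v.2 + rep_D u.1 v.1 w.2).

Lemma sd_br_bilin : bilin sd_br.
Proof.
split=> k [x a] [x' a'] [y b]; congr pair; rewrite /= ?br_bilin.1 ?br_bilin.2 //;
  by rewrite rhoZl rho_linear; apply/lfunP => t; lfun_eval; ring.
Qed.

Lemma sd_tr_trilin : trilin sd_tr.
Proof.
split; [|split] => k [x a] [y b] [z c] [w d]; congr pair;
  rewrite /= ?tr_trilin.1 ?tr_trilin.2.1 ?tr_trilin.2.2 //.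
- rewrite muZ1 mu_linear (rep_D_linear1 z d k x y).
  by apply/lfunP => t; lfun_eval; ring.
- rewrite muZ1 mu_linear (rep_D_skew (k *: y + z) x d) (rep_D_linear1 x d k y z).
  rewrite (rep_D_skew x y d) (rep_D_skew x z d).
  by apply/lfunP => t; lfun_eval; ring.
- rewrite !muZ2 rep_D_linear.
  by apply/lfunP => t; lfun_eval; ring.
Qed.

Lemma sd_br_skew u v : sd_br u v = - sd_br v u.
Proof. by congr pair; [exact: br_skew | rewrite /= opprB]. Qed.

Lemma sd_tr_skew u v w : sd_tr u v w = - sd_tr v u w.
Proof.
congr pair; first exact: tr_skew.
by rewrite /= (rep_D_skew u.1 v.1); apply/lfunP => t; lfun_eval; ring.
Qed.

Lemma sd_jacobi u v w : sd_br (sd_br u v) w + sd_br (sd_br v w) u + sd_br (sd_br w u) v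
  + sd_tr u v w + sd_tr v w u + sd_tr w u v = 0.
Proof.
congr pair; rewrite /= ?br_jacobi // !rep_DE.
by rewrite ?(rhoD, rhoN); apply/lfunP => t; lfun_eval; ring.
Qed.

Lemma sd_tr_br_cyclic u1 u2 u3 u4 :
  sd_tr (sd_br u1 u2) u3 u4 + sd_tr (sd_br u2 u3) u1 u4 + sd_tr (sd_br u3 u1) u2 u4 = 0.
Proof.
case: u1 u2 u3 u4 => [x1 a1] [x2 a2] [x3 a3] [x4 a4]; congr pair; first exact: tr_br_cyclic.
have E := D_br_cyclic x1 x2 x3 a4.
by rewrite /= ?(mu_brl, muD, muN); lfun_lincomb E.
Qed.

Lemma sd_tr_der_br u1 u2 u3 u4 :
  sd_tr u1 u2 (sd_br u3 u4) = sd_br (sd_tr u1 u2 u3) u4 + sd_br u3 (sd_tr u1 u2 u4).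
Proof.
case: u1 u2 u3 u4 => [x1 a1] [x2 a2] [x3 a3] [x4 a4]; congr pair; first exact: tr_der_br.
rewrite /= ?(mu_brr, DD, DN, D_rho, rhoD, rhoN).
by apply/lfunP => t; lfun_eval; ring.
Qed.

Lemma sd_tr_der_tr u1 u2 u3 u4 u5 : sd_tr u1 u2 (sd_tr u3 u4 u5)
  = sd_tr (sd_tr u1 u2 u3) u4 u5 + sd_tr u3 (sd_tr u1 u2 u4) u5
    + sd_tr u3 u4 (sd_tr u1 u2 u5).
Proof.
case: u1 u2 u3 u4 u5 => [x1 a1] [x2 a2] [x3 a3] [x4 a4] [x5 a5].
congr pair; first exact: tr_der_tr.
rewrite /= (mu_trr x2 x3 x4 x5 a1) (mu_trr x1 x3 x4 x5 a2) ?(DD, DN).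
rewrite (D_mu x1 x2 x4 x5 a3) (D_mu x1 x2 x3 x5 a4) (D_D x1 x2 x3 x4 a5).
by rewrite ?(muD, muN, DD, DN); apply/lfunP => t; lfun_eval; ring.
Qed.

Lemma sd_is_LY : is_LY sd_br sd_tr.
Proof.
split; first exact: sd_br_bilin. split; first exact: sd_tr_trilin.
split; first exact: sd_br_skew. split; first exact: sd_tr_skew.
split; first exact: sd_jacobi. split; first exact: sd_tr_br_cyclic.
split; first exact: sd_tr_der_br. exact: sd_tr_der_tr.
Qed.

End SemidirectProduct.

Section PreLYToPhaseSpace.
Variables (F : fieldType) (V : vectType F) (br : V -> V -> V) (tr : V -> V -> V -> V)
  (mul : V -> V -> V) (brc : V -> V -> V -> V).
Hypothesis LY : is_LY br tr.
Hypothesis preLY : is_preLY mul brc.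
Hypothesis comC_br : forall x y, comC mul x y = br x y.
Hypothesis trC_tr : forall x y z, trC mul brc x y z = tr x y z.

Let mul_bilin : bilin mul := preLY.1.
Let brc_trilin : trilin brc := preLY.2.1.
Let brc_comCl : forall x y z w,
  brc z (comC mul x y) w - brc (mul y z) x w + brc (mul x z) y w = 0 := preLY.2.2.1.
Let brc_comCr : forall x y z w,
  brc x y (comC mul z w) = mul z (brc x y w) - mul w (brc x y z) := preLY.2.2.2.1.
Let brc_brc : forall x y z w t, brc (brc x y z) w t - brc (brc x y w) z t
  - brc x y (brcD mul brc z w t) - brc x y (brc z w t) + brc x y (brc w z t)
  + brcD mul brc z w (brc x y t) = 0 := preLY.2.2.2.2.1.
Let brc_brcD : forall x y z w t, brc z (brcD mul brc x y w) t + brc z (brc x y w) t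
  - brc z (brc y x w) t + brc z w (brcD mul brc x y t) + brc z w (brc x y t)
  - brc z w (brc y x t) = brcD mul brc x y (brc z w t) - brc (brcD mul brc x y z) w t
  := preLY.2.2.2.2.2.1.
Let mul_brcD : forall x y z w, mul (brcD mul brc x y z) w + mul (brc x y z) w
  - mul (brc y x z) w = brcD mul brc x y (mul z w) - mul z (brcD mul brc x y w)
  := preLY.2.2.2.2.2.2.

Local Ltac expand := rewrite ?(bilinDl mul_bilin, bilinNl mul_bilin, bilinZl mul_bilin,
  bilinDr mul_bilin, bilinNr mul_bilin, bilinZr mul_bilin,
  trilinD1 brc_trilin, trilinN1 brc_trilin, trilinZ1 brc_trilin,
  trilinD2 brc_trilin, trilinN2 brc_trilin, trilinZ2 brc_trilin,
  trilinD3 brc_trilin, trilinN3 brc_trilin, trilinZ3 brc_trilin)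
  ?(dualD, dualN, dualZ, dual0).

Definition dual_rho x (b : dual V) : dual V := dual_of_fun (fun t => - b (mul x t)).
Definition dual_mu y z (a : dual V) : dual V := dual_of_fun (fun t => a (brc t z y)).

Lemma dual_rhoE x b t : dual_rho x b t = - b (mul x t).
Proof. by apply: dual_of_funE => k u v; expand; ring. Qed.
Lemma dual_muE y z a t : dual_mu y z a t = a (brc t z y).
Proof. by apply: dual_of_funE => k u v; expand. Qed.

Local Notation D := (rep_D br dual_rho dual_mu).

Lemma dual_DE x y c t : D x y c t = - c (brcD mul brc x y t).
Proof.
rewrite rep_DE -comC_br /brcD /assoc /comC.
by rewrite ?(add_lfunE, opp_lfunE, dual_rhoE, dual_muE); expand; ring.
Qed.

Local Ltac dual_eval := rewrite ?(add_lfunE, opp_lfunE, scale_lfunE, zero_lfunE,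
  dual_rhoE, dual_muE, dual_DE, scale_regularE).

Lemma dual_rho_linear x : linear (dual_rho x).
Proof. by move=> k a b; apply/lfunP => t; dual_eval; ring. Qed.
Lemma dual_rho_linearl a : linear (fun x => dual_rho x a).
Proof. by move=> k x y /=; apply/lfunP => t; dual_eval; expand; ring. Qed.
Lemma dual_mu_linear y z : linear (dual_mu y z).
Proof. by move=> k a b; apply/lfunP => t; dual_eval. Qed.
Lemma dual_mu_linear1 z a : linear (fun y => dual_mu y z a).
Proof. by move=> k x y /=; apply/lfunP => t; dual_eval; expand. Qed.
Lemma dual_mu_linear2 y a : linear (fun z => dual_mu y z a).
Proof. by move=> k x z /=; apply/lfunP => t; dual_eval; expand. Qed.

Lemma dual_mu_brl y z w a :
  dual_mu (br z w) y a = dual_mu z y (dual_rho w a) - dual_mu w y (dual_rho z a).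
Proof. by apply/lfunP => t; dual_eval; rewrite -comC_br brc_comCr; expand; ring. Qed.

Lemma dual_mu_brr w x y a :
  dual_mu w (br x y) a = - dual_rho y (dual_mu w x a) + dual_rho x (dual_mu w y a).
Proof.
apply/lfunP => t; move: (congr1 a (brc_comCl x y t w)); rewrite comC_br.
by dual_eval; expand => E; lincomb E.
Qed.

Lemma dual_D_rho x y z a :
  D x y (dual_rho z a) = dual_rho (tr x y z) a + dual_rho z (D x y a).
Proof.
apply/lfunP => t; move: (congr1 a (mul_brcD x y z t)); rewrite -trC_tr /trC.
by dual_eval; move: (brcD mul brc) => bD; expand => E; lincomb E.
Qed.

Lemma dual_D_mu x y w t a : D x y (dual_mu w t a)
  = dual_mu w t (D x y a) + dual_mu (tr x y w) t a + dual_mu w (tr x y t) a.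
Proof.
apply/lfunP => s; move: (congr1 a (brc_brcD x y s t w)); rewrite -!trC_tr /trC.
by dual_eval; move: (brcD mul brc) => bD; expand => E; lincomb E.
Qed.

Lemma dual_mu_trl z w t y a : dual_mu (tr z w t) y a
  = dual_mu z y (dual_mu t w a) - dual_mu w y (dual_mu t z a) - dual_mu t y (D z w a).
Proof.
apply/lfunP => s; move: (congr1 a (brc_brc s y z w t)); rewrite -trC_tr /trC.
by dual_eval; move: (brcD mul brc) => bD; expand => E; lincomb E.
Qed.

Local Notation Br := (sd_br br dual_rho).
Local Notation Tr := (sd_tr br tr dual_rho dual_mu).

Lemma dual_sd_is_LY : is_LY Br Tr.
Proof.
apply: sd_is_LY => //; [exact: dual_rho_linear | exact: dual_rho_linearl
  | exact: dual_mu_linear | exact: dual_mu_linear1 | exact: dual_mu_linear2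
  | exact: dual_mu_brl | exact: dual_mu_brr | exact: dual_D_rho | exact: dual_D_mu
  | exact: dual_mu_trl].
Qed.

Lemma dual_omega_br u v w :
  omega_p u (Br v w) + omega_p v (Br w u) + omega_p w (Br u v) = 0.
Proof.
case: u v w => [x a] [y b] [z c]; rewrite /omega_p /= -!comC_br /comC.
by dual_eval; expand; ring.
Qed.

Lemma dual_omega_tr u v w s : omega_p w (Tr u v s) - omega_p u (Tr s w v)
  + omega_p v (Tr s w u) - omega_p s (Tr u v w) = 0.
Proof.
case: u v w s => [x a] [y b] [z c] [t d]; rewrite /omega_p /= -!trC_tr /trC.
by dual_eval; move: (brcD mul brc) => bD; expand; ring.
Qed.

Lemma dual_sd_is_phase_space : is_phase_space br tr Br Tr.
Proof.
split; first exact: dual_sd_is_LY.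
split.
  split; first exact: omega_p_bilin. split; first exact: omega_p_skew.
  split; first exact: omega_p_nondeg. split; [exact: dual_omega_br | exact: dual_omega_tr].
split.
  by move=> x y; congr pair; apply/lfunP => t; dual_eval; rewrite oppr0 subrr.
split.
  by move=> x y z; congr pair; apply/lfunP => t; dual_eval; ring.
split; first by move=> a b; exact: bilin0l LY.1 0.
by move=> a b c; exact: trilin01 LY.2.1 0 0.
Qed.

End PreLYToPhaseSpace.

Unset Implicit Arguments.
Theorem theorem4p7 (F : fieldType) (charF0 : [pchar F] =i pred0)
  (V : vectType F) (br : V -> V -> V) (tr : V -> V -> V -> V) :
  is_LY br tr ->
  (has_phase_space br tr <->
   exists (mul : V -> V -> V) (brc : V -> V -> V -> V),
     is_preLY mul brc /\
     (forall x y, comC mul x y = br x y) /\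
     (forall x y z, trC mul brc x y z = tr x y z)).
Proof.
move=> LY; split.
  case=> Br [Tr phase]; exists (ps_mul Br), (ps_brc Tr).
  split; first exact: ps_is_preLY phase.
  by split; [exact: ps_comC phase | exact: ps_trC phase].
case=> mul [brc [preLY [comC_br trC_tr]]].
exists (sd_br br (dual_rho mul)), (sd_tr br tr (dual_rho mul) (dual_mu brc)).
exact: dual_sd_is_phase_space.
Qed.
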